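(* Let $\mathcal{H}$ be a complex Hilbert space and $T\in\mathbb{B}(\mathcal{H})$ with Cartesian decomposition $T=T_1+iT_2$, $T_1=\frac{T+T^*}{2}$, $T_2=\frac{T-T^*}{2i}$. Then the quantity $2\omega^2(T)-\max(\alpha(T),\alpha(T^* ))+D(T)$ is nonnegative and \[ \|T\|\le \sqrt{2\,\omega^2(T)-\max\big(\alpha(T),\alpha(T^* )\big)+D(T)}\le 2\,\omega(T). \]
   Context: $\mathbb{B}(\mathcal{H})$ denotes the bounded linear operators on $\mathcal{H}$. For $T\in\mathbb{B}(\mathcal{H})$: $\omega(T)=\sup\{|\langle Tx,x\rangle| : \|x\|=1\}$ (numerical radius); $\|T\|$ is the operator norm; $\alpha(T)=\inf_{\|x\|=1}\|Tx\|^2$; $D(T)=2\min(\|T_1\|^2,\|T_2\|^2)$ where $T_1=\frac{T+T^*}{2}$, $T_2=\frac{T-T^*}{2i}$. *)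

From Stdlib Require Import Reals Lra ClassicalEpsilon.
Open Scope R_scope.

Definition C : Type := (R * R)%type.
Definition Cre (z : C) : R := fst z.
Definition Cim (z : C) : R := snd z.
Definition Cadd (z w : C) : C := (fst z + fst w, snd z + snd w).
Definition Cmul (z w : C) : C :=
  (fst z * fst w - snd z * snd w, fst z * snd w + snd z * fst w).
Definition Cconj (z : C) : C := (fst z, - snd z).
Definition Cmod (z : C) : R := sqrt (fst z ^ 2 + snd z ^ 2).
Definition C0 : C := (0, 0).
Definition C1 : C := (1, 0).

Record CHilbert := {
  hV :> Type;
  hadd : hV -> hV -> hV;
  hzero : hV;
  hopp : hV -> hV;
  hscal : C -> hV -> hV;
  hip : hV -> hV -> C;               (* linear in the first argument *)
  hadd_assoc : forall u v w, hadd u (hadd v w) = hadd (hadd u v) w;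
  hadd_comm : forall u v, hadd u v = hadd v u;
  hadd_0 : forall u, hadd u hzero = u;
  hadd_opp : forall u, hadd u (hopp u) = hzero;
  hscal_assoc : forall a b v, hscal a (hscal b v) = hscal (Cmul a b) v;
  hscal_1 : forall v, hscal C1 v = v;
  hscal_addv : forall a u v, hscal a (hadd u v) = hadd (hscal a u) (hscal a v);
  hscal_adds : forall a b v, hscal (Cadd a b) v = hadd (hscal a v) (hscal b v);
  hip_add : forall u v w, hip (hadd u v) w = Cadd (hip u w) (hip v w);
  hip_scal : forall a u w, hip (hscal a u) w = Cmul a (hip u w);
  hip_conj : forall u v, hip u v = Cconj (hip v u);
  hip_pos : forall u, 0 <= Cre (hip u u);
  hip_def : forall u, hip u u = C0 -> u = hzero;
  hcomplete : forall s : nat -> hV,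
    (forall eps, eps > 0 -> exists N, forall m n, (N <= m)%nat -> (N <= n)%nat ->
        sqrt (Cre (hip (hadd (s m) (hopp (s n))) (hadd (s m) (hopp (s n))))) < eps) ->
    exists l, forall eps, eps > 0 -> exists N, forall n, (N <= n)%nat ->
        sqrt (Cre (hip (hadd (s n) (hopp l)) (hadd (s n) (hopp l)))) < eps
}.

Arguments hadd {c}. Arguments hzero {c}. Arguments hopp {c}.
Arguments hscal {c}. Arguments hip {c}.

Definition hnorm {H : CHilbert} (x : H) : R := sqrt (Cre (hip x x)).
Definition hsub {H : CHilbert} (x y : H) : H := hadd x (hopp y).

Definition is_linear {H : CHilbert} (T : H -> H) : Prop :=
  (forall u v, T (hadd u v) = hadd (T u) (T v)) /\
  (forall a v, T (hscal a v) = hscal a (T v)).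
Definition is_bounded_op {H : CHilbert} (T : H -> H) : Prop :=
  is_linear T /\ exists M, forall x, hnorm (T x) <= M * hnorm x.
Definition is_adjoint {H : CHilbert} (T S : H -> H) : Prop :=
  forall x y, hip (T x) y = hip x (S y).

(* ---- supremum / infimum of sets of reals (0 if not bounded or empty) ---- *)
Definition Rsup (E : R -> Prop) : R :=
  match excluded_middle_informative (bound E /\ exists x, E x) with
  | left h => proj1_sig (completeness E (proj1 h) (proj2 h))
  | right _ => 0
  end.
Definition Rinf (E : R -> Prop) : R := - Rsup (fun r => E (- r)).

Definition num_radius {H : CHilbert} (T : H -> H) : R :=
  Rsup (fun r => exists x : H, hnorm x = 1 /\ r = Cmod (hip (T x) x)).
Definition op_norm {H : CHilbert} (T : H -> H) : R :=
  Rsup (fun r => exists x : H, hnorm x = 1 /\ r = hnorm (T x)).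
Definition alpha {H : CHilbert} (T : H -> H) : R :=
  Rinf (fun r => exists x : H, hnorm x = 1 /\ r = hnorm (T x) ^ 2).
(* Cartesian parts, given the adjoint Ts of T *)
Definition re_part {H : CHilbert} (T Ts : H -> H) : H -> H :=
  fun x => hscal (1/2, 0) (hadd (T x) (Ts x)).
Definition im_part {H : CHilbert} (T Ts : H -> H) : H -> H :=
  fun x => hscal (0, -(1/2)) (hsub (T x) (Ts x)).   (* 1/(2i) = -i/2 *)
Definition Dq {H : CHilbert} (T Ts : H -> H) : R :=
  2 * Rmin (op_norm (re_part T Ts) ^ 2) (op_norm (im_part T Ts) ^ 2).

(** Let w = ω(T).  Since |<Tz,z>| <= w ‖z‖², polarization bounds the
    Cartesian parts: ‖T₁x‖, ‖T₂x‖ <= w ‖x‖.  The parallelogram law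
    ‖Tx‖² + ‖T*x‖² = 2 (‖T₁x‖² + ‖T₂x‖²) then gives, for unit x,
    ‖Tx‖² + ‖T*x‖² <= 2w² + D(T).  Dropping ‖T*x‖², which is at least
    α of the adjoint, bounds ‖Tx‖².  For α(T), apply the same bound at
    y = Tx/‖Tx‖, where ‖Tx‖ = Re <x, T*y> <= ‖T*y‖ and ‖Ty‖² >= α(T).
    Finally D(T) <= 2w² and α >= 0 give the upper bound 2w. *)
From Stdlib Require Import Reals Lra Psatz ClassicalEpsilon Classical.
Open Scope R_scope.

Definition rip {H : CHilbert} (u v : H) : R := fst (hip u v).
Definition iip {H : CHilbert} (u v : H) : R := snd (hip u v).
Definition nsq {H : CHilbert} (u : H) : R := rip u u.

Lemma rip_addl {H : CHilbert} (u v w : H) : rip (hadd u v) w = rip u w + rip v w.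
Proof. unfold rip. rewrite hip_add. reflexivity. Qed.
Lemma iip_addl {H : CHilbert} (u v w : H) : iip (hadd u v) w = iip u w + iip v w.
Proof. unfold iip. rewrite hip_add. reflexivity. Qed.
Lemma rip_scall {H : CHilbert} a (u w : H) :
  rip (hscal a u) w = fst a * rip u w - snd a * iip u w.
Proof. unfold rip, iip. rewrite hip_scal. reflexivity. Qed.
Lemma iip_scall {H : CHilbert} a (u w : H) :
  iip (hscal a u) w = fst a * iip u w + snd a * rip u w.
Proof. unfold rip, iip. rewrite hip_scal. reflexivity. Qed.
Lemma rip_sym {H : CHilbert} (u v : H) : rip u v = rip v u.
Proof. unfold rip. rewrite hip_conj. reflexivity. Qed.
Lemma iip_asym {H : CHilbert} (u v : H) : iip u v = - iip v u.
Proof. unfold iip. rewrite hip_conj. reflexivity. Qed.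
Lemma iip_self {H : CHilbert} (u : H) : iip u u = 0.
Proof. pose proof (iip_asym u u). lra. Qed.
Lemma rip_addr {H : CHilbert} (u v w : H) : rip w (hadd u v) = rip w u + rip w v.
Proof. rewrite !(rip_sym w). apply rip_addl. Qed.
Lemma iip_addr {H : CHilbert} (u v w : H) : iip w (hadd u v) = iip w u + iip w v.
Proof. rewrite !(iip_asym w), iip_addl. lra. Qed.
Lemma rip_scalr {H : CHilbert} a (u w : H) :
  rip w (hscal a u) = fst a * rip w u + snd a * iip w u.
Proof. rewrite !(rip_sym w), rip_scall, (iip_asym u). lra. Qed.
Lemma iip_scalr {H : CHilbert} a (u w : H) :
  iip w (hscal a u) = fst a * iip w u - snd a * rip w u.
Proof. rewrite !(iip_asym w), iip_scall, (rip_sym u). lra. Qed.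

Lemma hip_zerol {H : CHilbert} (w : H) : hip hzero w = C0.
Proof.
  pose proof (hip_add H hzero hzero w) as E. rewrite hadd_0 in E.
  destruct (hip hzero w) as [p q]. unfold Cadd in E; simpl in E.
  injection E; intros. unfold C0; f_equal; lra.
Qed.
Lemma rip_oppl {H : CHilbert} (u w : H) : rip (hopp u) w = - rip u w.
Proof.
  pose proof (rip_addl u (hopp u) w) as E.
  rewrite hadd_opp in E. unfold rip in E at 1. rewrite hip_zerol in E. simpl in E. lra.
Qed.
Lemma iip_oppl {H : CHilbert} (u w : H) : iip (hopp u) w = - iip u w.
Proof.
  pose proof (iip_addl u (hopp u) w) as E.
  rewrite hadd_opp in E. unfold iip in E at 1. rewrite hip_zerol in E. simpl in E. lra.
Qed.
Lemma rip_oppr {H : CHilbert} (u w : H) : rip w (hopp u) = - rip w u.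
Proof. rewrite !(rip_sym w). apply rip_oppl. Qed.
Lemma iip_oppr {H : CHilbert} (u w : H) : iip w (hopp u) = - iip w u.
Proof. rewrite !(iip_asym w), iip_oppl. lra. Qed.

Ltac ipsimpl := repeat (rewrite ?rip_addl, ?iip_addl, ?rip_scall, ?iip_scall,
  ?rip_addr, ?iip_addr, ?rip_scalr, ?iip_scalr, ?rip_oppl, ?iip_oppl,
  ?rip_oppr, ?iip_oppr in *); cbn [fst snd] in *.

Lemma nsq_nonneg {H : CHilbert} (u : H) : 0 <= nsq u.
Proof. apply hip_pos. Qed.
Lemma hnorm_nonneg {H : CHilbert} (u : H) : 0 <= hnorm u.
Proof. apply sqrt_pos. Qed.
Lemma hnorm_sq {H : CHilbert} (u : H) : hnorm u ^ 2 = nsq u.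
Proof. unfold hnorm. rewrite <- Rsqr_pow2. apply Rsqr_sqrt, hip_pos. Qed.

Lemma nsq_eq0 {H : CHilbert} (u : H) : nsq u = 0 -> u = hzero.
Proof.
  intro E. apply hip_def. pose proof (iip_self u). unfold nsq, rip, iip in *.
  destruct (hip u u); simpl in *; subst; reflexivity.
Qed.

Lemma nsq_scal {H : CHilbert} (a : R * R) (u : H) :
  nsq (hscal a u) = (fst a ^ 2 + snd a ^ 2) * nsq u.
Proof. unfold nsq. ipsimpl. rewrite iip_self. ring. Qed.

Lemma hnorm_normalize {H : CHilbert} (u : H) : 0 < hnorm u ->
  hnorm (hscal (/ hnorm u, 0) u) = 1.
Proof.
  intros P. change (sqrt (nsq (hscal (/ hnorm u, 0) u)) = 1).
  rewrite nsq_scal, <- hnorm_sq. cbn [fst snd].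
  replace (((/ hnorm u) ^ 2 + 0 ^ 2) * hnorm u ^ 2) with 1 by (field; lra).
  apply sqrt_1.
Qed.

Lemma nsq_parallelogram {H : CHilbert} (x v : H) (s : R) :
  nsq (hadd x (hscal (s, 0) v)) + nsq (hadd x (hscal (- s, 0) v)) =
  2 * nsq x + 2 * s ^ 2 * nsq v.
Proof. unfold nsq. ipsimpl. rewrite ?iip_self, (rip_sym v x). ring. Qed.

(* [re_part] and [im_part] unfold to the two vectors below. *)
Lemma parallelogram_cartesian {H : CHilbert} (a b : H) :
  nsq a + nsq b =
  2 * (nsq (hscal (1/2, 0) (hadd a b)) + nsq (hscal (0, - (1/2)) (hsub a b))).
Proof.
  unfold nsq, hsub. ipsimpl. rewrite ?iip_self, (rip_sym b a), (iip_asym b a). lra.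
Qed.

Lemma cauchy_schwarz_re {H : CHilbert} (u v : H) : rip u v ^ 2 <= nsq u * nsq v.
Proof.
  assert (K : forall t, 0 <= nsq u - 2 * t * rip u v + t ^ 2 * nsq v).
  { intro t. pose proof (nsq_nonneg (hadd u (hscal (-t, 0) v))) as P. unfold nsq in *.
    ipsimpl. rewrite (rip_sym v u), (iip_self v) in P. nra. }
  pose proof (nsq_nonneg u); pose proof (nsq_nonneg v).
  destruct (Req_dec (nsq v) 0) as [E|E].
  - destruct (Req_dec (rip u v) 0) as [F|F].
    + rewrite F, E. lra.
    + exfalso. pose proof (K ((nsq u + 1) / (2 * rip u v))) as K'. rewrite E in K'.
      replace (nsq u - 2 * ((nsq u + 1) / (2 * rip u v)) * rip u v
               + ((nsq u + 1) / (2 * rip u v)) ^ 2 * 0) with (-1) in K' by (field; auto).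
      lra.
  - pose proof (K (rip u v / nsq v)) as K'.
    apply (Rmult_le_compat_r (nsq v)) in K'; [|lra].
    replace ((nsq u - 2 * (rip u v / nsq v) * rip u v + (rip u v / nsq v) ^ 2 * nsq v) * nsq v)
      with (nsq u * nsq v - rip u v ^ 2) in K' by (field; lra).
    lra.
Qed.

(* Cauchy-Schwarz for the real part, applied to the rotated vector <u,v> v. *)
Lemma Cmod_hip_le {H : CHilbert} (u v : H) : Cmod (hip u v) <= hnorm u * hnorm v.
Proof.
  set (m := rip u v ^ 2 + iip u v ^ 2).
  pose proof (cauchy_schwarz_re u (hscal (hip u v) v)) as CS.
  rewrite rip_scalr, nsq_scal in CS. fold (rip u v) (iip u v) in CS.
  replace (rip u v * rip u v + iip u v * iip u v) with m in CS by (unfold m; ring).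
  change (rip u v ^ 2 + iip u v ^ 2) with m in CS.
  assert (Hm : m <= nsq u * nsq v).
  { pose proof (nsq_nonneg u); pose proof (nsq_nonneg v).
    assert (0 <= m) by (unfold m; nra).
    destruct (Req_dec m 0) as [Z|Z]; [rewrite Z; nra|].
    apply (Rmult_le_reg_l m); [lra|]. nra. }
  unfold Cmod, hnorm. rewrite <- sqrt_mult_alt by apply hip_pos.
  apply sqrt_le_1_alt. exact Hm.
Qed.

Lemma rip_le_Cmod {H : CHilbert} (u v : H) : Rabs (rip u v) <= Cmod (hip u v).
Proof.
  unfold Cmod, rip. rewrite <- sqrt_Rsqr_abs. apply sqrt_le_1_alt. unfold Rsqr.
  pose proof (pow2_ge_0 (snd (hip u v))). lra.
Qed.
Lemma iip_le_Cmod {H : CHilbert} (u v : H) : Rabs (iip u v) <= Cmod (hip u v).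
Proof.
  unfold Cmod, iip. rewrite <- sqrt_Rsqr_abs. apply sqrt_le_1_alt. unfold Rsqr.
  pose proof (pow2_ge_0 (fst (hip u v))). lra.
Qed.

Lemma quadratic_form_bound {H : CHilbert} (f : H -> R) (w : R) :
  (forall c z, f (hscal (c, 0) z) = c ^ 2 * f z) ->
  (forall u, hnorm u = 1 -> Rabs (f u) <= w) ->
  forall z, Rabs (f z) <= w * nsq z.
Proof.
  intros Hom Hunit z.
  destruct (Req_dec (nsq z) 0) as [Z|Z].
  - assert (Ez : hscal (0, 0) z = z).
    { transitivity (@hzero H).
      - apply nsq_eq0. rewrite nsq_scal. cbn [fst snd]. ring.
      - symmetry. apply nsq_eq0, Z. }
    assert (Fz : f z = 0) by (rewrite <- Ez, Hom; ring).
    rewrite Fz, Z, Rabs_R0. lra.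
  - assert (Pz : 0 < hnorm z).
    { destruct (hnorm_nonneg z) as [|E]; [assumption|].
      rewrite <- hnorm_sq, <- E in Z. exfalso. apply Z. ring. }
    assert (Ef : f z = hnorm z ^ 2 * f (hscal (/ hnorm z, 0) z))
      by (rewrite Hom; field; lra).
    rewrite Ef, Rabs_mult, Rabs_right, hnorm_sq by (apply Rle_ge, pow2_ge_0).
    pose proof (Hunit _ (hnorm_normalize z Pz)). pose proof (nsq_nonneg z). nra.
Qed.

Lemma real_polarization_ineq (w a n : R) : 0 <= w -> 0 <= a -> 0 <= n ->
  (forall s, 4 * s * a <= w * (2 * n + 2 * s ^ 2 * a)) -> a <= w ^ 2 * n.
Proof.
  intros Pw Pa Pn K. destruct (Req_dec w 0) as [E|E].
  - subst. specialize (K 1). nra.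
  - specialize (K (/ w)).
    apply (Rmult_le_compat_r w) in K; [|lra].
    replace (4 * / w * a * w) with (4 * a) in K by (field; lra).
    replace (w * (2 * n + 2 * (/ w) ^ 2 * a) * w) with (2 * w ^ 2 * n + 2 * a) in K
      by (field; lra).
    lra.
Qed.

Lemma nsq_le_of_polarization {H : CHilbert} (q : H -> R) (A : H -> H) (w : R) :
  0 <= w -> (forall z, Rabs (q z) <= w * nsq z) ->
  (forall x v s, q (hadd x (hscal (s, 0) v)) - q (hadd x (hscal (- s, 0) v))
                 = 4 * s * rip (A x) v) ->
  forall x, nsq (A x) <= w ^ 2 * nsq x.
Proof.
  intros Pw Hq Hpol x. apply real_polarization_ineq; auto using nsq_nonneg. intro s.
  pose proof (Hpol x (A x) s) as E. change (rip (A x) (A x)) with (nsq (A x)) in E.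
  pose proof (nsq_parallelogram x (A x) s).
  pose proof (Hq (hadd x (hscal (s, 0) (A x)))) as B1.
  pose proof (Hq (hadd x (hscal (- s, 0) (A x)))) as B2.
  pose proof (Rle_abs (q (hadd x (hscal (s, 0) (A x))))).
  pose proof (Rle_abs (- q (hadd x (hscal (- s, 0) (A x))))).
  rewrite Rabs_Ropp in *.
  nra.
Qed.

Lemma Rsup_ub (E : R -> Prop) x : bound E -> E x -> x <= Rsup E.
Proof.
  intros B Ex. unfold Rsup. destruct excluded_middle_informative as [h|h].
  - lazymatch goal with |- context [completeness ?a ?b ?c] =>
      destruct (proj2_sig (completeness a b c)) as [U _] end.
    apply U; auto.
  - exfalso; apply h; split; eauto.
Qed.
Lemma Rsup_le (E : R -> Prop) M : (forall x, E x -> x <= M) -> 0 <= M -> Rsup E <= M.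
Proof.
  intros U P. unfold Rsup. destruct excluded_middle_informative as [h|h]; auto.
  lazymatch goal with |- context [completeness ?a ?b ?c] =>
    destruct (proj2_sig (completeness a b c)) as [_ L] end.
  apply L. intros x Ex; auto.
Qed.
Lemma Rsup_nonneg (E : R -> Prop) : (forall x, E x -> 0 <= x) -> 0 <= Rsup E.
Proof.
  intros P. unfold Rsup. destruct excluded_middle_informative as [h|h]; [|lra].
  pose proof h as [B [x Ex]].
  lazymatch goal with |- context [completeness ?a ?b ?c] =>
    destruct (proj2_sig (completeness a b c)) as [U _] end.
  apply Rle_trans with x; auto.
Qed.
Lemma Rsup_empty (E : R -> Prop) : (forall x, ~ E x) -> Rsup E = 0.
Proof.
  intros P. unfold Rsup. destruct excluded_middle_informative as [h|h]; auto.
  pose proof h as [_ [x Ex]]. exfalso; eapply P; eauto.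
Qed.

Lemma sqrt_le_of_le_sq x y : 0 <= y -> x <= y ^ 2 -> sqrt x <= y.
Proof. intros Py Hx. rewrite <- (sqrt_pow2 y Py). apply sqrt_le_1_alt. auto. Qed.

Lemma op_norm_nonneg {H : CHilbert} (A : H -> H) : 0 <= op_norm A.
Proof. apply Rsup_nonneg. intros r [x [_ ->]]. apply hnorm_nonneg. Qed.

Lemma op_norm_le {H : CHilbert} (A : H -> H) c : 0 <= c ->
  (forall x, hnorm x = 1 -> hnorm (A x) <= c) -> op_norm A <= c.
Proof. intros Pc HA. apply Rsup_le; auto. intros r [x [Hx ->]]. auto. Qed.

Lemma hnorm_le_op_norm {H : CHilbert} (A : H -> H) c :
  (forall x, hnorm x = 1 -> hnorm (A x) <= c) ->
  forall x, hnorm x = 1 -> hnorm (A x) <= op_norm A.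
Proof.
  intros HA x Hx. apply Rsup_ub; [|eauto].
  exists c. intros r [y [Hy ->]]. auto.
Qed.

Lemma hnorm_le_of_nsq_le {H : CHilbert} (A : H -> H) w : 0 <= w ->
  (forall x, nsq (A x) <= w ^ 2 * nsq x) -> forall x, hnorm x = 1 -> hnorm (A x) <= w.
Proof.
  intros Pw HA x Hx. apply sqrt_le_of_le_sq; auto.
  pose proof (HA x) as B. rewrite <- (hnorm_sq x), Hx in B. change (nsq (A x) <= w ^ 2). lra.
Qed.

Lemma num_radius_nonneg {H : CHilbert} (T : H -> H) : 0 <= num_radius T.
Proof. apply Rsup_nonneg. intros r [x [_ ->]]. apply sqrt_pos. Qed.

Lemma Cmod_le_num_radius {H : CHilbert} (T : H -> H) (M : R) :
  (forall x, hnorm (T x) <= M * hnorm x) ->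
  forall x, hnorm x = 1 -> Cmod (hip (T x) x) <= num_radius T.
Proof.
  intros HM x Hx. apply Rsup_ub; [|eauto].
  exists M. intros r [y [Hy ->]].
  pose proof (Cmod_hip_le (T y) y). pose proof (HM y). rewrite Hy in *. lra.
Qed.

Lemma alpha_le {H : CHilbert} (T : H -> H) x : hnorm x = 1 -> alpha T <= nsq (T x).
Proof.
  intros Hx. unfold alpha, Rinf.
  assert (- nsq (T x) <= Rsup (fun r => exists y : H, hnorm y = 1 /\ - r = hnorm (T y) ^ 2)).
  { apply Rsup_ub.
    - exists 0. intros r [y [_ E]]. pose proof (nsq_nonneg (T y)). rewrite hnorm_sq in E. lra.
    - exists x. split; auto. rewrite hnorm_sq. lra. }
  lra.
Qed.
Lemma alpha_nonneg {H : CHilbert} (T : H -> H) : 0 <= alpha T.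
Proof.
  unfold alpha, Rinf.
  assert (Rsup (fun r => exists y : H, hnorm y = 1 /\ - r = hnorm (T y) ^ 2) <= 0).
  { apply Rsup_le; [|lra]. intros r [y [_ E]].
    pose proof (nsq_nonneg (T y)). rewrite hnorm_sq in E. lra. }
  lra.
Qed.
Lemma alpha_no_unit {H : CHilbert} (T : H -> H) :
  (forall x : H, hnorm x <> 1) -> alpha T = 0.
Proof.
  intros P. unfold alpha, Rinf. rewrite Rsup_empty; [lra|].
  intros r [y [Hy _]]. eapply P; eauto.
Qed.

Section CartesianDecomposition.

Context {H : CHilbert} (T Ts : H -> H).
Hypothesis T_adjoint : is_adjoint T Ts.

Lemma nsq_add_alpha_le (Q : R) :
  (forall x, hnorm x = 1 -> nsq (T x) + nsq (Ts x) <= Q) ->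
  forall x, hnorm x = 1 -> nsq (T x) + alpha T <= Q.
Proof.
  intros HQ x Hx. destruct (Req_dec (hnorm (T x)) 0) as [E|E].
  - assert (nsq (T x) = 0) by (rewrite <- hnorm_sq, E; ring).
    pose proof (alpha_le T x Hx). pose proof (HQ x Hx). pose proof (nsq_nonneg (Ts x)). lra.
  - pose proof (hnorm_nonneg (T x)). assert (Pz : 0 < hnorm (T x)) by lra.
    set (y := hscal (/ hnorm (T x), 0) (T x)).
    assert (Hy : hnorm y = 1) by apply (hnorm_normalize _ Pz).
    assert (Ey : rip (Ts y) x = hnorm (T x)).
    { rewrite rip_sym. unfold rip. rewrite <- T_adjoint. fold (rip (T x) y).
      unfold y. ipsimpl. fold (nsq (T x)). rewrite <- hnorm_sq. field. lra. }
    pose proof (cauchy_schwarz_re (Ts y) x) as CS. rewrite Ey, <- (hnorm_sq x), Hx in CS.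
    rewrite <- hnorm_sq. pose proof (HQ y Hy). pose proof (alpha_le T y Hy). nra.
Qed.

Hypothesis T_linear : is_linear T.

Lemma rip_T_scal c z :
  rip (T (hscal (c, 0) z)) (hscal (c, 0) z) = c ^ 2 * rip (T z) z.
Proof. rewrite (proj2 T_linear). ipsimpl. ring. Qed.
Lemma iip_T_scal c z :
  iip (T (hscal (c, 0) z)) (hscal (c, 0) z) = c ^ 2 * iip (T z) z.
Proof. rewrite (proj2 T_linear). ipsimpl. ring. Qed.

Lemma re_part_polarization x v s :
  rip (T (hadd x (hscal (s, 0) v))) (hadd x (hscal (s, 0) v))
  - rip (T (hadd x (hscal (- s, 0) v))) (hadd x (hscal (- s, 0) v))
  = 4 * s * rip (re_part T Ts x) v.
Proof.
  destruct T_linear as [Tadd Tscal]. rewrite !Tadd, !Tscal.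
  assert (F : rip (T v) x = rip v (Ts x)) by (unfold rip; rewrite T_adjoint; reflexivity).
  unfold re_part. ipsimpl. rewrite F, (rip_sym (Ts x) v). lra.
Qed.

Lemma im_part_polarization x v s :
  iip (T (hadd x (hscal (s, 0) v))) (hadd x (hscal (s, 0) v))
  - iip (T (hadd x (hscal (- s, 0) v))) (hadd x (hscal (- s, 0) v))
  = 4 * s * rip (im_part T Ts x) v.
Proof.
  destruct T_linear as [Tadd Tscal]. rewrite !Tadd, !Tscal.
  assert (F : iip (T v) x = iip v (Ts x)) by (unfold iip; rewrite T_adjoint; reflexivity).
  unfold im_part, hsub. ipsimpl. rewrite F, (iip_asym (Ts x) v). lra.
Qed.

Variable M : R.
Hypothesis T_bounded : forall x, hnorm (T x) <= M * hnorm x.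

Lemma nsq_re_part_le x : nsq (re_part T Ts x) <= num_radius T ^ 2 * nsq x.
Proof.
  apply (nsq_le_of_polarization (fun z => rip (T z) z));
    [apply num_radius_nonneg | | apply re_part_polarization].
  apply quadratic_form_bound; [apply rip_T_scal|].
  intros u Hu. eapply Rle_trans; [apply rip_le_Cmod | apply (Cmod_le_num_radius T M); auto].
Qed.

Lemma nsq_im_part_le x : nsq (im_part T Ts x) <= num_radius T ^ 2 * nsq x.
Proof.
  apply (nsq_le_of_polarization (fun z => iip (T z) z));
    [apply num_radius_nonneg | | apply im_part_polarization].
  apply quadratic_form_bound; [apply iip_T_scal|].
  intros u Hu. eapply Rle_trans; [apply iip_le_Cmod | apply (Cmod_le_num_radius T M); auto].
Qed.

Lemma Dq_le : 0 <= Dq T Ts <= 2 * num_radius T ^ 2.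
Proof.
  pose proof (num_radius_nonneg T) as Pw.
  assert (B1 : op_norm (re_part T Ts) ^ 2 <= num_radius T ^ 2).
  { apply pow_incr. split; [apply op_norm_nonneg|].
    apply op_norm_le; auto. apply hnorm_le_of_nsq_le; auto. apply nsq_re_part_le. }
  pose proof (pow2_ge_0 (op_norm (re_part T Ts))).
  pose proof (pow2_ge_0 (op_norm (im_part T Ts))).
  unfold Dq, Rmin. destruct Rle_dec; lra.
Qed.

Lemma nsq_T_add_nsq_Ts_le x : hnorm x = 1 ->
  nsq (T x) + nsq (Ts x) <= 2 * num_radius T ^ 2 + Dq T Ts.
Proof.
  intros Hx. pose proof (num_radius_nonneg T) as Pw.
  rewrite parallelogram_cartesian. fold (re_part T Ts x) (im_part T Ts x).
  pose proof (nsq_re_part_le x); pose proof (nsq_im_part_le x).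
  rewrite <- (hnorm_sq x), Hx in *.
  assert (nsq (re_part T Ts x) <= op_norm (re_part T Ts) ^ 2).
  { rewrite <- hnorm_sq. apply pow_incr. split; [apply hnorm_nonneg|].
    apply (hnorm_le_op_norm _ (num_radius T)); auto.
    apply hnorm_le_of_nsq_le; auto. apply nsq_re_part_le. }
  assert (nsq (im_part T Ts x) <= op_norm (im_part T Ts) ^ 2).
  { rewrite <- hnorm_sq. apply pow_incr. split; [apply hnorm_nonneg|].
    apply (hnorm_le_op_norm _ (num_radius T)); auto.
    apply hnorm_le_of_nsq_le; auto. apply nsq_im_part_le. }
  unfold Dq, Rmin. destruct Rle_dec; lra.
Qed.

Lemma nsq_T_le x : hnorm x = 1 ->
  nsq (T x) <= 2 * num_radius T ^ 2 - Rmax (alpha T) (alpha Ts) + Dq T Ts.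
Proof.
  intros Hx.
  pose proof (nsq_add_alpha_le _ nsq_T_add_nsq_Ts_le x Hx).
  pose proof (nsq_T_add_nsq_Ts_le x Hx). pose proof (alpha_le Ts x Hx).
  unfold Rmax; destruct Rle_dec; lra.
Qed.

End CartesianDecomposition.

Theorem proposition2p2 (H : CHilbert) (T Ts : H -> H)
  (hT : is_bounded_op T) (hTs : is_adjoint T Ts) :
  0 <= 2 * num_radius T ^ 2 - Rmax (alpha T) (alpha Ts) + Dq T Ts /\
  op_norm T <= sqrt (2 * num_radius T ^ 2 - Rmax (alpha T) (alpha Ts) + Dq T Ts) /\
  sqrt (2 * num_radius T ^ 2 - Rmax (alpha T) (alpha Ts) + Dq T Ts) <= 2 * num_radius T.
Proof.
  destruct hT as [hl [M HM]].
  pose proof (nsq_T_le T Ts hTs hl M HM) as Hq.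
  pose proof (Dq_le T Ts hTs hl M HM) as HD.
  pose proof (num_radius_nonneg T).
  assert (Qpos : 0 <= 2 * num_radius T ^ 2 - Rmax (alpha T) (alpha Ts) + Dq T Ts).
  { destruct (classic (exists x : H, hnorm x = 1)) as [[x Hx]|NE].
    - pose proof (Hq x Hx). pose proof (nsq_nonneg (T x)). lra.
    - assert (F : forall x : H, hnorm x <> 1) by (intros x Hx; apply NE; eauto).
      rewrite (alpha_no_unit T F), (alpha_no_unit Ts F), Rmax_left; nra. }
  split; [|split]; auto.
  - apply op_norm_le; [apply sqrt_pos|]. intros x Hx.
    apply sqrt_le_1_alt, Hq, Hx.
  - apply sqrt_le_of_le_sq; [lra|].
    pose proof (alpha_nonneg T). pose proof (Rmax_l (alpha T) (alpha Ts)). lra.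
Qed.
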